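(* There exist a game $\Gamma$ and a principal utility function $U_0$ such that the optimal principal objective value over all $0$-CEPs of $\Gamma$ is strictly greater than the optimal objective value over those $0$-CEPs $(\mu,P)$ in which each $P_i(s,a)$ depends only on $a$ (and not on the signal profile $s$).
   Context: $\Gamma$ has agents $i\in[n]$, finite action sets $A_i$, $A=\prod_iA_i$, utilities $U_i:A\to\mathbb{R}$; principal utility $U_0$ on $A$ (values may be real or $-\infty$). A correlated profile with payments is $(\mu,P)$ with $\mu\in\Delta(A)$, $P_i:A\times A\to\mathbb{R}_+$ ($P_i(s,a)$ = payment to $i$ under recommendation $s$ and played profile $a$). Its objective value is $\mathbb{E}_{a\sim\mu}[U_0(a)-\sum_iP_i(a,a)]$. It is a $0$-CEP if for every $i$ and $\phi_i:A_i\to A_i$, $\mathbb{E}_{a\sim\mu}[U_i(\phi_i(a_i),a_{-i})+P_i(a,(\phi_i(a_i),a_{-i}))-U_i(a)-P_i(a,a)]\le0$. *)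

From HB Require Import structures.
From mathcomp Require Import all_boot all_order all_algebra.
From mathcomp Require Import boolp classical_sets reals constructive_ereal ereal.
Set Implicit Arguments. Unset Strict Implicit. Unset Printing Implicit Defensive.
Import Order.TTheory GRing.Theory Num.Theory.
Local Open Scope ring_scope.
Local Open Scope classical_set_scope.

Section Game.
Variables (R : realType) (n : nat) (A : 'I_n -> finType).

Definition profile := {dffun forall i : 'I_n, A i}.

Definition dev (a : profile) (i : 'I_n) (x : A i) : profile :=
  [ffun j => @eqtype.dfwith _ A (fun j => a j) i x j].

Definition is_distr (mu : profile -> R) : Prop :=
  (forall a, 0 <= mu a) /\ \sum_(a : profile) mu a = 1.

(* P_i : A x A -> R_+, P i s a = payment to i under recommendation s, play a *)
Definition nonneg_payments (P : 'I_n -> profile -> profile -> R) : Prop :=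
  forall i s a, 0 <= P i s a.

Definition is_0CEP (U : 'I_n -> profile -> R) (mu : profile -> R)
    (P : 'I_n -> profile -> profile -> R) : Prop :=
  is_distr mu /\ nonneg_payments P /\
  forall (i : 'I_n) (phi : A i -> A i),
    \sum_(a : profile) mu a *
      (U i (dev a (phi (a i))) + P i a (dev a (phi (a i)))
        - U i a - P i a a) <= 0.

(* objective E_{a ~ mu}[U_0(a) - sum_i P_i(a,a)], in the extended reals;
   uses the convention 0 * (-oo) = 0 of mathcomp-analysis *)
Definition objective (U0 : profile -> \bar R) (mu : profile -> R)
    (P : 'I_n -> profile -> profile -> R) : \bar R :=
  (\sum_(a : profile) (mu a)%:E * (U0 a - (\sum_(i < n) P i a a)%:E))%E.

Definition signal_independent (P : 'I_n -> profile -> profile -> R) : Prop :=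
  forall i s s' a, P i s a = P i s' a.

Definition opt_value (U : 'I_n -> profile -> R) (U0 : profile -> \bar R)
    (Q : ('I_n -> profile -> profile -> R) -> Prop) : \bar R :=
  ereal_sup [set v | exists mu P, [/\ is_0CEP U mu P, Q P &
                                      v = objective U0 mu P]].
End Game.

From HB Require Import structures.
From mathcomp Require Import all_boot all_order all_algebra.
From mathcomp Require Import boolp classical_sets reals constructive_ereal ereal.
From mathcomp Require Import lra.
Set Implicit Arguments. Unset Strict Implicit. Unset Printing Implicit Defensive.
Import Order.TTheory GRing.Theory Num.Theory.
Local Open Scope ring_scope.

(* Take matching pennies (agent 0 wants to match, agent 1 to mismatch) and a
   principal who gets 2 everywhere except on the profile (false, true), where
   she gets -oo.  Recommending the other three profiles uniformly and paying
   agent 1 one unit only when she obeys the recommendation (true, true) is a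
   0-CEP of value 2 - 1/3 = 5/3.  If payments cannot see the recommendation,
   the unit paid at (true, true) is also earned by agent 1 deviating from
   (true, false) to (true, true); this forces payments of at least 1/2 in
   expectation, so signal-independent 0-CEPs are worth at most 3/2. *)

Section Payments.
Variables (R : realType) (n : nat) (A : 'I_n -> finType).
Implicit Types (U : 'I_n -> profile A -> R) (mu : profile A -> R)
  (P : 'I_n -> profile A -> profile A -> R).

Definition expected_payment mu P : R := \sum_(a : profile A) mu a * \sum_(i < n) P i a a.

Definition agent_payment mu P (i : 'I_n) : R := \sum_(a : profile A) mu a * P i a a.

Lemma objective_eqNy (U0 : profile A -> \bar R) mu P a :
  0 < mu a -> U0 a = -oo%E -> objective U0 mu P = -oo%E.
Proof.
move=> mu_gt0 U0a; apply/eqP; rewrite esum_eqNy; apply/existsP; exists a.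
by rewrite U0a addNye gt0_muleNy ?lte_fin.
Qed.

Lemma objective_const (U0 : profile A -> \bar R) mu P (c : R) : is_distr mu ->
  (forall a, mu a != 0 -> U0 a = c%:E) ->
  objective U0 mu P = (c - expected_payment mu P)%:E.
Proof.
move=> [_ mu1] U0c; rewrite /objective.
under eq_bigr => a _.
  have -> : ((mu a)%:E * (U0 a - (\sum_(i < n) P i a a)%:E))%E =
            (mu a * (c - \sum_(i < n) P i a a))%:E.
    have [->|/U0c ->] := eqVneq (mu a) 0; first by rewrite mul0e mul0r.
    by rewrite -EFinB -EFinM.
  over.
rewrite sumEFin; congr (_%:E).
rewrite /expected_payment -[c in RHS]mulr1 -mu1 mulr_sumr -sumrB.
by apply: eq_bigr => a _; rewrite mulrBr mulrC.
Qed.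

Lemma expected_paymentE mu P :
  expected_payment mu P = \sum_(i < n) agent_payment mu P i.
Proof. by rewrite exchange_big; apply: eq_bigr => a _; rewrite mulr_sumr. Qed.

Lemma agent_payment_ge0 U mu P (i : 'I_n) : is_0CEP U mu P -> 0 <= agent_payment mu P i.
Proof. by move=> [[mu_ge0 _] [P_ge0 _]]; apply: sumr_ge0 => a _; rewrite mulr_ge0. Qed.

Lemma deviation_gain_le_agent_payment U mu P : is_0CEP U mu P ->
  forall (i : 'I_n) (phi : A i -> A i),
  \sum_(a : profile A) mu a * (U i (dev a (phi (a i))) - U i a) <= agent_payment mu P i.
Proof.
move=> [[mu_ge0 _] [P_ge0 incentive]] i phi.
rewrite -subr_le0 -sumrB; apply: le_trans (incentive i phi); apply: ler_sum => a _.
have := mu_ge0 a; have := P_ge0 i a (dev a (phi (a i))); nra.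
Qed.

End Payments.

Definition bool2 : 'I_2 -> finType := fun=> bool.

Definition pprof (x y : bool) : profile bool2 :=
  [ffun i : 'I_2 => (if i == ord0 then x else y : bool2 i)].

Lemma pprofE0 x y : pprof x y ord0 = x. Proof. by rewrite ffunE. Qed.
Lemma pprofE1 x y : pprof x y ord_max = y. Proof. by rewrite ffunE. Qed.

Lemma ord2P (i : 'I_2) : i = ord0 \/ i = ord_max.
Proof. by case: i => -[|[|//]] ?; [left|right]; apply: val_inj. Qed.

Lemma pprof_eta (a : profile bool2) : pprof (a ord0) (a ord_max) = a.
Proof. by apply/ffunP => i; rewrite ffunE; case: (ord2P i) => ->. Qed.

Lemma pprof_eq x y x' y' : (pprof x y == pprof x' y') = (x == x') && (y == y').
Proof.
apply/eqP/andP => [|[/eqP-> /eqP->] //].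
move=> E; have := congr1 (fun a : profile bool2 => (a ord0, a ord_max)) E.
by rewrite /= !pprofE0 !pprofE1 => -[-> ->].
Qed.

Lemma dev_pprof0 x y (z : bool2 ord0) : dev (pprof x y) z = pprof z y.
Proof.
apply/ffunP => i; rewrite !ffunE; case: (ord2P i) => ->; first by rewrite dfwith_in.
by rewrite dfwith_out // ffunE.
Qed.

Lemma dev_pprof1 x y (z : bool2 ord_max) : dev (pprof x y) z = pprof x z.
Proof.
apply/ffunP => i; rewrite !ffunE; case: (ord2P i) => ->; last by rewrite dfwith_in.
by rewrite dfwith_out // ffunE.
Qed.

Lemma sum_profile_bool2 (M : nmodType) (F : profile bool2 -> M) :
  \sum_(a : profile bool2) F a =
  F (pprof true true) + F (pprof true false) +
  (F (pprof false true) + F (pprof false false)).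
Proof.
rewrite (reindex (fun p : bool * bool => pprof p.1 p.2)) /=; last first.
  exists (fun a => (a ord0, a ord_max)) => [[x y] _|a _] /=.
    by rewrite pprofE0 pprofE1.
  exact: pprof_eta.
by rewrite -(pair_big xpredT xpredT (fun x y => F (pprof x y))) !big_bool.
Qed.

Lemma sum_ord2 (M : nmodType) (F : 'I_2 -> M) : \sum_(i < 2) F i = F ord0 + F ord_max.
Proof. by rewrite big_ord_recl big_ord1; congr (_ + F _); apply: val_inj. Qed.

Section MatchingPennies.
Variable R : realType.

Definition pennies (i : 'I_2) (a : profile bool2) : R :=
  if i == ord0 then (a ord0 == a ord_max)%:R else (a ord0 != a ord_max)%:R.

Definition principal_utility (a : profile bool2) : \bar R :=
  if a == pprof false true then -oo%E else 2%:E.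

Definition recommendation (a : profile bool2) : R :=
  if a == pprof false true then 0 else 3^-1.

Definition obedience_bonus (i : 'I_2) (s a : profile bool2) : R :=
  if [&& i == ord_max, s == a & a == pprof true true] then 1 else 0.

Lemma principal_utility_ne0 (mu : profile bool2 -> R) a :
  mu (pprof false true) = 0 -> mu a != 0 -> principal_utility a = 2%:E.
Proof.
move=> mu_FT; rewrite /principal_utility.
by have [->|//] := eqVneq a (pprof false true); rewrite mu_FT eqxx.
Qed.

Lemma obedience_bonus_CEP : is_0CEP pennies recommendation obedience_bonus.
Proof.
split; [split|split].
- by move=> a; rewrite /recommendation; case: ifP; rewrite ?invr_ge0.
- by rewrite sum_profile_bool2 /recommendation !pprof_eq /=; lra.
- by move=> i s a; rewrite /obedience_bonus; case: ifP.
move=> i; case: (ord2P i) => -> phi;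
  rewrite sum_profile_bool2 /pennies /recommendation /obedience_bonus
    !pprofE0 ?dev_pprof0 ?dev_pprof1 !pprofE0 !pprofE1 !pprof_eq /=;
  by case: (phi true); case: (phi false) => /=; lra.
Qed.

Lemma objective_obedience_bonus :
  objective principal_utility recommendation obedience_bonus = (5/3)%:E.
Proof.
have [distr _] := obedience_bonus_CEP.
rewrite (objective_const _ (c := 2)) //; last first.
  by move=> a; apply: principal_utility_ne0; rewrite /recommendation eqxx.
rewrite /expected_payment sum_profile_bool2 !sum_ord2 /recommendation
  /obedience_bonus !pprof_eq /=.
by congr EFin; lra.
Qed.

Lemma opt_value_ge :
  ((5/3)%:E <= opt_value pennies principal_utility (fun=> True))%E.
Proof.
apply: ereal_sup_ubound; exists recommendation, obedience_bonus.
by split; rewrite ?objective_obedience_bonus //; exact: obedience_bonus_CEP.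
Qed.

Lemma matcher_payment_ge mu P : is_0CEP pennies mu P -> mu (pprof false true) = 0 ->
  mu (pprof true false) - mu (pprof true true) <= agent_payment mu P ord0.
Proof.
move=> cep mu_FT; have := deviation_gain_le_agent_payment cep (i := ord0) (fun=> false).
by rewrite sum_profile_bool2 /pennies !dev_pprof0 !pprofE0 !pprofE1 mu_FT /=; lra.
Qed.

Lemma mismatcher_payment_ge mu P : is_0CEP pennies mu P -> mu (pprof false true) = 0 ->
  mu (pprof false false) - mu (pprof true false) <= agent_payment mu P ord_max.
Proof.
move=> cep mu_FT; have := deviation_gain_le_agent_payment cep (i := ord_max) (fun=> true).
by rewrite sum_profile_bool2 /pennies !dev_pprof1 !pprofE0 !pprofE1 mu_FT /=; lra.
Qed.

Lemma mismatcher_payment_ge_signal_independent mu P :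
  is_0CEP pennies mu P -> signal_independent P -> mu (pprof false true) = 0 ->
  0 < mu (pprof true true) ->
  mu (pprof true true) + mu (pprof false false) <= agent_payment mu P ord_max.
Proof.
move=> [[mu_ge0 _] [P_ge0 incentive]] si mu_FT mTT_gt0.
(* One payment function q serves both as the reward for obeying at (true, true)
   and as the reward for deviating to (true, true) from (true, false). *)
have [q Pq] : exists q, forall s a, P ord_max s a = q a.
  by exists (fun a => P ord_max a a) => s a; exact: si.
have q_ge0 a : 0 <= q a by rewrite -(Pq a a); apply: P_ge0.
have obeyF := incentive ord_max (fun=> false).
have obeyT := incentive ord_max (fun=> true).
rewrite !sum_profile_bool2 /pennies !dev_pprof1 !pprofE0 !pprofE1 !Pq mu_FT /=
  in obeyF obeyT.
have bonus_TT : 1 + q (pprof true false) <= q (pprof true true).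
  by rewrite -subr_ge0 -(pmulr_rge0 _ mTT_gt0); lra.
have bonus_FF : mu (pprof false false) <= mu (pprof false false) * q (pprof false false).
  have : 0 <= mu (pprof true false) * (q (pprof true true) - 1 - q (pprof true false)).
    by apply: mulr_ge0; [exact: mu_ge0 | lra].
  have := mulr_ge0 (mu_ge0 (pprof false false)) (q_ge0 (pprof false true)).
  lra.
have : 0 <= mu (pprof true true) * (q (pprof true true) - 1).
  by apply: mulr_ge0; [exact: mu_ge0 | have := q_ge0 (pprof true false); lra].
have := mulr_ge0 (mu_ge0 (pprof true false)) (q_ge0 (pprof true false)).
rewrite /agent_payment sum_profile_bool2 !Pq mu_FT mul0r; lra.
Qed.

Lemma signal_independent_payment_ge mu P :
  is_0CEP pennies mu P -> signal_independent P -> mu (pprof false true) = 0 ->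
  1/2 <= expected_payment mu P.
Proof.
move=> cep si mu_FT; have [[mu_ge0 mu1] _] := cep.
rewrite sum_profile_bool2 mu_FT in mu1.
have := agent_payment_ge0 ord0 cep; have := agent_payment_ge0 ord_max cep.
have := matcher_payment_ge cep mu_FT; have := mismatcher_payment_ge cep mu_FT.
have := mu_ge0 (pprof false false).
rewrite expected_paymentE sum_ord2.
have [mTT0|mTT_neq0] := eqVneq (mu (pprof true true)) 0; first lra.
have mTT_gt0 : 0 < mu (pprof true true) by rewrite lt_def mTT_neq0 mu_ge0.
have := mismatcher_payment_ge_signal_independent cep si mu_FT mTT_gt0; lra.
Qed.

Lemma opt_value_signal_independent_le :
  (opt_value pennies principal_utility (@signal_independent R 2 bool2) <= (3/2)%:E)%E.
Proof.
apply: ge_ereal_sup => _ [mu [P [cep si ->]]].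
have [[mu_ge0 _] _] := cep; have [distr _] := cep.
have [mu_FT|mu_FT] := eqVneq (mu (pprof false true)) 0.
  rewrite (objective_const _ (c := 2)) ?lee_fin //; last first.
    by move=> a; apply: principal_utility_ne0.
  by have := signal_independent_payment_ge cep si mu_FT; lra.
rewrite (objective_eqNy _ (a := pprof false true)) ?leNye //.
  by rewrite lt_def mu_FT mu_ge0.
by rewrite /principal_utility eqxx.
Qed.
End MatchingPennies.

Theorem proposition7p4 (R : realType) :
  exists (n : nat) (A : 'I_n -> finType) (U : 'I_n -> profile A -> R)
         (U0 : profile A -> \bar R),
    (opt_value U U0 (@signal_independent R n A)
       < opt_value U U0 (fun _ => True))%E.
Proof.
exists 2, bool2, (@pennies R), (@principal_utility R).
apply: le_lt_trans (opt_value_signal_independent_le R) _.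
by apply: lt_le_trans (opt_value_ge R); rewrite lte_fin; lra.
Qed.
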